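(* Let $\mathcal{X},\mathcal{Y}$ be finite sets with $|\mathcal{X}|,|\mathcal{Y}|\ge 2$, let $\mathcal{A}=\mathcal{B}=\{0,1\}$, and let $\epsilon_A,\epsilon_B\in[0,1)$. Then for every extreme point (vertex) $p^{ext}$ of the set $\mathcal{P}_2^{AB,(\epsilon_A,\epsilon_B)}$ and all $a,b,x,y$, one has $$p^{ext}(ab|xy)=\alpha\cdot\beta\quad\text{for some }\alpha\in\{0,\epsilon_A,1-\epsilon_A,1\},\ \beta\in\{0,\epsilon_B,1-\epsilon_B,1\}.$$ More precisely, every vertex is of the form $p^{ext}(ab|xy)=p_A(a|xy)\,p_B(b|xy)$ with $p_A(a|xy)\in\{0,\epsilon_A,1-\epsilon_A,1\}$ and $p_B(b|xy)\in\{0,\epsilon_B,1-\epsilon_B,1\}$ for all $a,b,x,y$.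
   Context: Let $\mathcal{X},\mathcal{Y},\mathcal{A},\mathcal{B}$ be finite sets (inputs of Alice, inputs of Bob, outputs of Alice, outputs of Bob). For $\epsilon_A,\epsilon_B\in[0,1]$, $\mathcal{P}_2^{AB,(\epsilon_A,\epsilon_B)}$ denotes the set of all conditional distributions $p=(p(ab|xy))_{a,b,x,y}\in\mathbb{R}^{\mathcal{A}\times\mathcal{B}\times\mathcal{X}\times\mathcal{Y}}$ for which there exist a probability space $(\Lambda,q)$ and measurable families of probability distributions $p_A(\cdot|x,y,\lambda)$ on $\mathcal{A}$ and $p_B(\cdot|x,y,\lambda)$ on $\mathcal{B}$ (for all $x,y,\lambda$) such that $p(ab|xy)=\int q(d\lambda)\,p_A(a|xy\lambda)\,p_B(b|xy\lambda)$ for all $a,b,x,y$, and $\frac12\sum_a|p_A(a|xy\lambda)-p_A(a|xy'\lambda)|\le\epsilon_A$ for all $x,y,y',\lambda$, and $\frac12\sum_b|p_B(b|xy\lambda)-p_B(b|x'y\lambda)|\le\epsilon_B$ for all $y,x,x',\lambda$ (''$(\epsilon_A,\epsilon_B)$-parameter-dependent'' behaviors obeying outcome independence). *)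

From HB Require Import structures.
From mathcomp Require Import all_boot all_order all_algebra.
From mathcomp Require Import all_classical all_reals all_analysis.
Set Implicit Arguments. Unset Strict Implicit. Unset Printing Implicit Defensive.
Import Order.TTheory GRing.Theory Num.Theory.
Local Open Scope ring_scope.
Local Open Scope classical_set_scope.

Definition behavior (R : realType) (X Y : finType) := bool -> bool -> X -> Y -> R.

Definition in_P2 (R : realType) (X Y : finType) (eA eB : R)
  (p : behavior R X Y) : Prop :=
  exists (d : measure_display) (L : measurableType d) (q : probability L R)
         (pA : X -> Y -> L -> bool -> R) (pB : X -> Y -> L -> bool -> R),
    (forall x y a, measurable_fun setT (fun l => pA x y l a)) /\
        (forall x y b, measurable_fun setT (fun l => pB x y l b)) /\
        (forall x y l, (forall a, 0 <= pA x y l a) /\ \sum_(a : bool) pA x y l a = 1) /\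
        (forall x y l, (forall b, 0 <= pB x y l b) /\ \sum_(b : bool) pB x y l b = 1) /\
        (forall x y y' l,
            2^-1 * \sum_(a : bool) `|pA x y l a - pA x y' l a| <= eA) /\
        (forall x x' y l,
            2^-1 * \sum_(b : bool) `|pB x y l b - pB x' y l b| <= eB) /\
        (forall a b x y,
            ((p a b x y)%:E =
             \int[q]_(l in setT) ((pA x y l a * pB x y l b)%:E))%E).

Definition extreme_point (R : realType) (X Y : finType)
  (S : behavior R X Y -> Prop) (p : behavior R X Y) : Prop :=
  S p /\
  forall (p1 p2 : behavior R X Y) (t : R), S p1 -> S p2 -> 0 < t < 1 ->
    p = (fun a b x y => t * p1 a b x y + (1 - t) * p2 a b x y) ->
    p1 = p /\ p2 = p.

From HB Require Import structures.
From mathcomp Require Import all_boot all_order all_algebra.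
From mathcomp Require Import all_classical all_reals all_analysis.
From mathcomp Require Import measurable_realfun ring lra.
Set Implicit Arguments. Unset Strict Implicit. Unset Printing Implicit Defensive.
Import Order.TTheory GRing.Theory Num.Theory.
Local Open Scope ring_scope.

(* Conditioning the mixing probability on an
   event A and on its complement writes [p] as a convex combination of two
   points of P_2, so extremality forces the integral of the response over A to
   be P(A) p for every A: the response equals [p] almost surely, and [p] is a
   deterministic product of two binary tables u(x,y) = pA(true|x y) and
   v(x,y) = pB(true|x y).  Each table is rigid, since a perturbation u +- w
   respecting the constraints would exhibit [p] as a midpoint.  Finally, in a
   rigid table every entry lies in {0, e, 1 - e, 1}: otherwise the entries of its
   row equal to it or at distance exactly e from it all lie strictly inside
   (0,1) and at distance < e from the other entries of the row, so they can be
   shifted together. *)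

Lemma exists_pos_lower_bound (R : realDomainType) (I : finType) (s : I -> R) :
  (forall i, 0 < s i) -> exists2 d : R, 0 < d & forall i, d <= s i.
Proof.
move=> s_gt0; have [i0 _ | I0] := pickP [pred _ : I | true].
  case: (@arg_minP _ _ _ i0 xpredT s isT) => k _ min_k.
  by exists (s k) => // i; apply: min_k.
by exists 1 => // i; have := I0 i.
Qed.

(* [u i j] is the probability of the output [true]; [j] is the input of the
   other party. *)
Definition param_dependent (R : numDomainType) (I J : Type) (e : R)
  (u : I -> J -> R) :=
  (forall i j, 0 <= u i j <= 1) /\ (forall i j j', `|u i j - u i j'| <= e).

Section Cluster.
Variables (R : realFieldType) (J : finType) (e : R) (v : J -> R) (j0 : J).
Hypotheses (v01 : forall j, 0 <= v j <= 1) (dv : forall j j', `|v j - v j'| <= e).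
Hypothesis v_generic : v j0 \notin [:: 0; e; 1 - e; 1].

Definition cluster j := v j \in [:: v j0 - e; v j0; v j0 + e].

Let e_ge0 : 0 <= e. Proof. by have := dv j0 j0; rewrite subrr normr0. Qed.

Let generic : [/\ v j0 <> 0, v j0 <> e, v j0 <> 1 - e & v j0 <> 1].
Proof. by move: v_generic; rewrite !inE !negb_or => /and4P[] /eqP ? /eqP ? /eqP ? /eqP. Qed.

Lemma cluster_interior j : cluster j -> 0 < v j < 1.
Proof.
have [n0 ne n1e n1] := generic; have e0 := e_ge0; have /andP[c0 c1] := v01 j0.
move=> hj; have /andP[vj0 vj1] := v01 j; rewrite !lt_neqAle vj0 vj1 !andbT.
by apply/andP; split; apply/eqP => h; move: hj; rewrite /cluster !inE;
  case/or3P => /eqP hj;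
  first [apply: n0; lra | apply: ne; lra | apply: n1e; lra | apply: n1; lra].
Qed.

Lemma cluster_gap j j' : cluster j -> ~~ cluster j' -> `|v j - v j'| < e.
Proof.
(* Equality would put [v j'] in the cluster, since also [|v j' - v j0| <= e]. *)
move=> hj hj'; have e0 := e_ge0; rewrite lt_neqAle dv andbT; apply/eqP => heq.
have := dv j' j0; rewrite ler_norml => /andP[h1 h2].
move: hj hj'; rewrite /cluster !inE !negb_or => hj /and3P[/eqP n1 /eqP n2 /eqP n3].
have [hs|hs] := leP 0 (v j - v j'); [rewrite ger0_norm // in heq|rewrite ltr0_norm // in heq];
  case/or3P: hj => /eqP hj;
  first [apply: n1; lra | apply: n2; lra | apply: n3; lra].
Qed.

Definition cluster_shift (s : R) j := v j + (if cluster j then s else 0).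

Lemma cluster_shift_param_dependent : exists2 d : R, 0 < d & forall s, `|s| <= d ->
  (forall j, 0 <= cluster_shift s j <= 1) /\
  (forall j j', `|cluster_shift s j - cluster_shift s j'| <= e).
Proof.
pose slack (k : J * J) := let: (j, j') := k in
  if cluster j then Num.min (Num.min (v j) (1 - v j))
                            (if cluster j' then 1 else e - `|v j - v j'|)
  else 1.
have [d d_gt0 d_le] : exists2 d : R, 0 < d & forall k, d <= slack k.
  apply: exists_pos_lower_bound => -[j j'] /=; case: ifP => // hj.
  have /andP[vj0 vj1] := cluster_interior hj.
  rewrite !lt_min vj0 subr_gt0 vj1; case: ifPn => //= hj'.
  by rewrite subr_gt0 cluster_gap.
have d_bound j : cluster j -> d <= v j /\ d <= 1 - v j.
  by move=> hj; have := d_le (j, j); rewrite /= hj !le_min => /andP[/andP[-> ->]].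
have d_gap j j' : cluster j -> ~~ cluster j' -> d <= e - `|v j - v j'|.
  by move=> hj hj'; have := d_le (j, j'); rewrite /= hj (negbTE hj') !le_min => /andP[].
exists d => // s hs; have := hs; rewrite ler_norml => /andP[sl sr].
rewrite /cluster_shift; split.
  move=> j; case: ifP => hj; last by rewrite addr0 v01.
  by have [h1 h2] := d_bound j hj; apply/andP; split; lra.
move=> j j'; case: ifP => hj; case: ifP => hj'.
- by rewrite opprD addrACA subrr addr0 dv.
- have gap := d_gap j j' hj (negbT hj').
  have tri : `|v j - v j' + s| <= `|v j - v j'| + `|s| := ler_normD _ _.
  by rewrite addr0 addrAC; lra.
- have gap := d_gap j' j hj' (negbT hj).
  have tri : `|v j' - v j + s| <= `|v j' - v j| + `|s| := ler_normD _ _.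
  by rewrite addr0 distrC addrAC; lra.
- by rewrite !addr0 dv.
Qed.

End Cluster.

Lemma rigid_param_dependent_values (R : realFieldType) (I J : finType) (e : R)
    (u : I -> J -> R) :
  param_dependent e u ->
  (forall w : I -> J -> R, param_dependent e (fun i j => u i j + w i j) ->
     param_dependent e (fun i j => u i j - w i j) -> forall i j, w i j = 0) ->
  forall i j, u i j \in [:: 0; e; 1 - e; 1].
Proof.
move=> [u01 du] rigid i0 j0; apply/negPn/negP => generic.
have [d d_gt0 shift] := cluster_shift_param_dependent (u01 i0) (du i0) generic.
pose w s i j : R := if (i == i0) && cluster e (u i0) j0 j then s else 0.
have shiftP s : `|s| <= d -> param_dependent e (fun i j => u i j + w s i j).
  move=> /shift[s01 ds]; rewrite /w; split=> [i j|i j j']; case: eqP => [->|_] /=.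
  - exact: s01.
  - by rewrite addr0.
  - exact: ds.
  - by rewrite !addr0.
have w_opp : (fun i j => u i j - w d i j) = (fun i j => u i j + w (- d) i j).
  by apply/funext => i; apply/funext => j; rewrite /w; case: ifP; rewrite ?oppr0.
have : w d i0 j0 = 0 by apply: rigid; [apply: shiftP | rewrite w_opp; apply: shiftP];
  rewrite ?normrN gtr0_norm.
by rewrite /w /cluster eqxx !inE eqxx orbT /=; move/eqP; rewrite gt_eqF.
Qed.

Section BinaryTables.
Variables (R : realType) (X Y : finType).

Definition bindist (u : X -> Y -> R) (a : bool) x y : R :=
  if a then u x y else 1 - u x y.

Lemma bool_dist_falseE (F : bool -> R) : \sum_(a : bool) F a = 1 -> F false = 1 - F true.
Proof. by rewrite big_bool /= => <-; ring. Qed.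

Lemma sum_bindist u x y : \sum_(a : bool) bindist u a x y = 1.
Proof. by rewrite big_bool /bindist /= addrC subrK. Qed.

Lemma bool_dist_ge0_le1 (F : bool -> R) :
  (forall a, 0 <= F a) -> \sum_(a : bool) F a = 1 -> forall a, 0 <= F a <= 1.
Proof.
move=> F_ge0; rewrite big_bool /= => F1.
by case; rewrite F_ge0 /=; have := F_ge0 true; have := F_ge0 false; lra.
Qed.

Lemma bindist_ge0_le1 u a x y : 0 <= u x y <= 1 -> 0 <= bindist u a x y <= 1.
Proof. by case: a => //=; rewrite /bindist subr_ge0 lerBlDr lerDl andbC. Qed.

Lemma tv_bool_dist (F G : bool -> R) : \sum_(a : bool) F a = 1 -> \sum_(a : bool) G a = 1 ->
  2^-1 * \sum_(a : bool) `|F a - G a| = `|F true - G true|.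
Proof.
move=> /bool_dist_falseE F_false /bool_dist_falseE G_false.
rewrite big_bool /= F_false G_false.
have -> : 1 - F true - (1 - G true) = - (F true - G true) by ring.
by rewrite normrN; lra.
Qed.

Lemma bindist_vertex_values (e : R) u a x y : u x y \in [:: 0; e; 1 - e; 1] ->
  bindist u a x y \in [:: 0; e; 1 - e; 1].
Proof.
case: a => //; rewrite /bindist !inE => /or4P[] /eqP ->.
- by rewrite subr0 eqxx !orbT.
- by rewrite eqxx !orbT.
- by rewrite opprB addrC subrK eqxx !orbT.
- by rewrite subrr eqxx.
Qed.

Definition prod_behavior (u v : X -> Y -> R) : behavior R X Y :=
  fun a b x y => bindist u a x y * bindist v b x y.

Lemma prod_behavior_marginalA u v a x y :
  \sum_(b : bool) prod_behavior u v a b x y = bindist u a x y.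
Proof. by rewrite /prod_behavior -mulr_sumr sum_bindist mulr1. Qed.

Lemma prod_behavior_marginalB u v b x y :
  \sum_(a : bool) prod_behavior u v a b x y = bindist v b x y.
Proof. by rewrite /prod_behavior -mulr_suml sum_bindist mul1r. Qed.

End BinaryTables.

Lemma behavior_ext (R : realType) (X Y : finType) (p q : behavior R X Y) :
  (forall a b x y, p a b x y = q a b x y) -> p = q.
Proof.
by move=> pq; apply/funext => a; apply/funext => b; apply/funext => x; apply/funext => y.
Qed.

Lemma extreme_point_midpoint (R : realType) (X Y : finType) (S : behavior R X Y -> Prop)
    (p p1 p2 : behavior R X Y) :
  extreme_point S p -> S p1 -> S p2 ->
  (forall a b x y, p a b x y = 2^-1 * (p1 a b x y + p2 a b x y)) -> p1 = p.
Proof.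
move=> [_ ext] S1 S2 mid; have half : 0 < (2^-1 : R) < 1 by apply/andP; split; lra.
have p_mid : p = (fun a b x y => 2^-1 * p1 a b x y + (1 - 2^-1) * p2 a b x y).
  by apply: behavior_ext => a b x y; rewrite mid; lra.
by have [] := ext p1 p2 _ S1 S2 half p_mid.
Qed.

Section UnitValuedIntegrals.
Local Open Scope classical_set_scope.
Variables (R : realType) (d : measure_display) (L : measurableType d) (P : probability L R).
Variable f : L -> R.
Hypotheses (mf : measurable_fun setT f) (f01 : forall l, 0 <= f l <= 1).

Let f_ge0 l : 0 <= f l. Proof. by case/andP: (f01 l). Qed.

Lemma integrable_unit_valued (A : set L) : measurable A -> P.-integrable A (EFin \o f).
Proof.
move=> mA; apply/integrableP; split; first exact/measurable_EFinP/measurable_funTS.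
apply: (le_lt_trans (integral_le_bound 1%:E _ _ _ _)) => //.
- exact/measurable_EFinP/measurable_funTS.
- by apply: aeW => l _ /=; rewrite lee_fin ger0_norm //; case/andP: (f01 l).
- by rewrite mul1e ltey_eq fin_num_measure.
Qed.

Lemma Rintegral_null_set (A : set L) : measurable A -> P A = 0%E -> \int[P]_(l in A) f l = 0.
Proof.
by move=> mA PA0; rewrite /Rintegral null_set_integral //; exact/measurable_EFinP/measurable_funTS.
Qed.

Lemma Rintegral_setT_setC (A : set L) : measurable A ->
  \int[P]_l f l = \int[P]_(l in A) f l + \int[P]_(l in ~` A) f l.
Proof.
move=> mA; rewrite -[in LHS](setUv A) Rintegral_setU //.
- exact: measurableC.
- by rewrite setUv; apply: integrable_unit_valued.
- exact/disj_setPCl.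
Qed.

Lemma probability_fine_gt0 (A : set L) : measurable A ->
  (0 < P A)%E -> 0 < fine (P A).
Proof.
by move=> mA PA_gt0; rewrite fine_gt0 // PA_gt0 ltey_eq fin_num_measure.
Qed.

Lemma probability_fine_setC (A : set L) : measurable A ->
  fine (P (~` A)) = 1 - fine (P A).
Proof.
by move=> mA; rewrite probability_setC // fineB ?fin_num_measure.
Qed.

Definition condprob (A : set L) (mA : measurable A) : probability L R :=
  mnormalize (mrestr P mA) P.

Lemma condprobE (A : set L) (mA : measurable A) (C : set L) : (0 < P A)%E ->
  condprob mA C = (P (C `&` A) * ((fine (P A))^-1)%:E)%E.
Proof.
(* [change] looks through the canonical measure structure of [mrestr P mA],
   which hides the set [setT `&` A] from [rewrite]. *)
move=> PA_gt0; rewrite /condprob /=; unfold mnormalize; rewrite ifF.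
  by change ((P (C `&` A) * ((fine (P ([set: L] `&` A)))^-1)%:E =
              P (C `&` A) * ((fine (P A))^-1)%:E)%E); rewrite setTI.
change ((P ([set: L] `&` A) == 0) || (P ([set: L] `&` A) == +oo)%E = false).
by rewrite setTI gt_eqF // lt_eqF // ltey_eq fin_num_measure.
Qed.

Lemma Rintegral_condprob (A : set L) (mA : measurable A) : (0 < P A)%E ->
  \int[condprob mA]_l f l = (fine (P A))^-1 * \int[P]_(l in A) f l.
Proof.
move=> PA_gt0; have PA_fin := fin_num_measure P A mA.
have t_inv_ge0 : 0 <= (fine (P A))^-1.
  by rewrite invr_ge0 fine_ge0.
rewrite /Rintegral; suff -> : (\int[condprob mA]_(l in setT) (f l)%:E =
           ((fine (P A))^-1)%:E * \int[P]_(l in A) (f l)%:E)%E.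
  by rewrite fineM // integrable_fin_num // integrable_unit_valued.
rewrite -(setUv A) ge0_integral_setU //; first last.
- exact/disj_setPCl.
- by move=> l _; rewrite lee_fin.
- exact/measurable_EFinP/measurable_funTS.
- exact: measurableC.
rewrite (@null_set_integral _ _ _ _ (~` A)) ?adde0; first last.
- by have := condprobE mA (~` A) PA_gt0; rewrite setICl measure0 mul0e; apply.
- exact/measurable_EFinP/measurable_funTS.
- exact: measurableC.
rewrite (eq_measure_integral (mscale (NngNum t_inv_ge0) P)).
  by rewrite ge0_integral_mscale //; [exact/measurable_EFinP/measurable_funTS | move=> l _; rewrite lee_fin].
move=> C mC CA; have := condprobE mA C PA_gt0; rewrite setIidl // muleC; apply.
Qed.

End UnitValuedIntegrals.

Section HiddenVariableModel.
Local Open Scope classical_set_scope.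
Variables (R : realType) (X Y : finType) (eA eB : R) (d : measure_display)
  (L : measurableType d) (pA pB : X -> Y -> L -> bool -> R).
Hypotheses (mpA : forall x y a, measurable_fun setT (fun l => pA x y l a))
  (mpB : forall x y b, measurable_fun setT (fun l => pB x y l b))
  (pA_dist : forall x y l, (forall a, 0 <= pA x y l a) /\ \sum_(a : bool) pA x y l a = 1)
  (pB_dist : forall x y l, (forall b, 0 <= pB x y l b) /\ \sum_(b : bool) pB x y l b = 1)
  (pA_tv : forall x y y' l, 2^-1 * \sum_(a : bool) `|pA x y l a - pA x y' l a| <= eA)
  (pB_tv : forall x x' y l, 2^-1 * \sum_(b : bool) `|pB x y l b - pB x' y l b| <= eB).

Definition response a b x y l := pA x y l a * pB x y l b.

Definition mixture (P : probability L R) : behavior R X Y :=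
  fun a b x y => \int[P]_l response a b x y l.

Lemma param_dependent_pA l : param_dependent eA (fun x y => pA x y l true).
Proof.
split=> [x y | x y y']; first by have [ge0 sum1] := pA_dist x y l; exact: bool_dist_ge0_le1.
by have := pA_tv x y y' l; rewrite tv_bool_dist ?(pA_dist _ _ l).2.
Qed.

Lemma param_dependent_pB l : param_dependent eB (fun y x => pB x y l true).
Proof.
split=> [y x | y x x']; first by have [ge0 sum1] := pB_dist x y l; exact: bool_dist_ge0_le1.
by have := pB_tv x x' y l; rewrite tv_bool_dist ?(pB_dist _ _ l).2.
Qed.

Lemma response_prod_behavior l a b x y : response a b x y l =
  prod_behavior (fun x y => pA x y l true) (fun x y => pB x y l true) a b x y.
Proof.
rewrite /response /prod_behavior /bindist.
by case: a; case: b; rewrite ?(bool_dist_falseE (pA_dist x y l).2) ?(bool_dist_falseE (pB_dist x y l).2).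
Qed.

Lemma response_ge0_le1 a b x y l : 0 <= response a b x y l <= 1.
Proof.
have [pA01 _] := param_dependent_pA l; have [pB01 _] := param_dependent_pB l.
have /andP[A0 A1] := bindist_ge0_le1 (u := fun x y => pA x y l true) a (pA01 x y).
have /andP[B0 B1] := bindist_ge0_le1 (u := fun x y => pB x y l true) b (pB01 y x).
by rewrite response_prod_behavior mulr_ge0 ?mulr_ile1.
Qed.

Lemma measurable_response a b x y : measurable_fun setT (response a b x y).
Proof. exact: measurable_funM. Qed.

Lemma in_P2_mixture (P : probability L R) : in_P2 eA eB (mixture P).
Proof.
exists d, L, P, pA, pB; do 6 (split; first by []).
move=> a b x y; rewrite /mixture /Rintegral fineK //.
apply: integrable_fin_num => //.
exact (integrable_unit_valued P (measurable_response a b x y) (response_ge0_le1 a b x y) measurableT).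
Qed.

Lemma mixture_condprob (P : probability L R) (A : set L) (mA : measurable A) a b x y :
  (0 < P A)%E ->
  mixture (condprob P mA) a b x y = (fine (P A))^-1 * \int[P]_(l in A) response a b x y l.
Proof. exact (Rintegral_condprob (measurable_response a b x y) (response_ge0_le1 a b x y) mA). Qed.

Lemma mixture_condprob_split (P : probability L R) (A : set L) (mA : measurable A) :
  (0 < P A)%E -> (0 < P (~` A))%E ->
  mixture P = (fun a b x y => fine (P A) * mixture (condprob P mA) a b x y +
                 (1 - fine (P A)) * mixture (condprob P (measurableC mA)) a b x y).
Proof.
move=> PA_gt0 PC_gt0; have mC := measurableC mA.
have tA := probability_fine_gt0 mA PA_gt0; have tC := probability_fine_gt0 mC PC_gt0.
apply/funext=> a; apply/funext=> b; apply/funext=> x; apply/funext=> y.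
rewrite !mixture_condprob // -probability_fine_setC // !mulrA !divff ?gt_eqF // !mul1r.
exact (Rintegral_setT_setC P (measurable_response a b x y) (response_ge0_le1 a b x y) mA).
Qed.

Lemma extreme_mixture_Rintegral (P : probability L R) :
  extreme_point (in_P2 eA eB) (mixture P) -> forall A, measurable A -> forall a b x y,
  \int[P]_(l in A) response a b x y l = fine (P A) * mixture P a b x y.
Proof.
move=> [_ ext] A mA a b x y; have mC := measurableC mA.
have mr := measurable_response a b x y; have r01 := response_ge0_le1 a b x y.
have [PA0|PA_gt0] : P A = 0%E \/ (0 < P A)%E.
  by have := measure_ge0 P A; rewrite le_eqVlt => /orP[/eqP<-|]; [left|right].
  by rewrite PA0 mul0r (Rintegral_null_set mr mA PA0).
have [PC0|PC_gt0] : P (~` A) = 0%E \/ (0 < P (~` A))%E.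
  by have := measure_ge0 P (~` A); rewrite le_eqVlt => /orP[/eqP<-|]; [left|right].
  have PA1 : fine (P A) = 1 by have := probability_fine_setC P mA; rewrite PC0 /=; lra.
  by rewrite PA1 mul1r /mixture (Rintegral_setT_setC P mr r01 mA) (Rintegral_null_set mr mC PC0) addr0.
have tA := probability_fine_gt0 mA PA_gt0; have tC := probability_fine_gt0 mC PC_gt0.
have t01 : 0 < fine (P A) < 1 by rewrite tA /=; rewrite probability_fine_setC // in tC; lra.
have [/(congr1 (fun p => p a b x y)) + _] :=
  ext _ _ _ (in_P2_mixture _) (in_P2_mixture _) t01 (mixture_condprob_split mA PA_gt0 PC_gt0).
by rewrite mixture_condprob // => <-; rewrite mulrA divff ?gt_eqF // mul1r.
Qed.

Lemma extreme_mixture_point (P : probability L R) :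
  extreme_point (in_P2 eA eB) (mixture P) ->
  exists l, forall a b x y, response a b x y l = mixture P a b x y.
Proof.
move=> ext.
have ae a b x y : (EFin \o response a b x y) = cst (mixture P a b x y)%:E %[ae P].
  apply: integral_ae_eq => //.
    exact (integrable_unit_valued P (measurable_response a b x y) (response_ge0_le1 a b x y) measurableT).
  move=> E _ mE; rewrite integral_cst //.
  have fin : (\int[P]_(l in E) (response a b x y l)%:E)%E \is a fin_num.
    apply: integrable_fin_num => //.
    exact (integrable_unit_valued P (measurable_response a b x y) (response_ge0_le1 a b x y) mE).
  have := extreme_mixture_Rintegral ext mE a b x y; rewrite /Rintegral => h.
  by rewrite -[LHS](fineK fin) h EFinM muleC (@fineK _ (P E)) ?fin_num_measure.
have PT : (0 < P setT)%E by rewrite probability_setT.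
have [l hl] := @filter_ex _ _ (ae_properfilter_algebraOfSetsType PT) _
  (@filter_forall _ (bool * bool * X * Y)%type _ _ _ (fun k => ae k.1.1.1 k.1.1.2 k.1.2 k.2)).
by exists l => a b x y; case: (hl (a, b, x, y) I).
Qed.

End HiddenVariableModel.

Lemma prod_behavior_in_P2 (R : realType) (X Y : finType) (eA eB : R) (u v : X -> Y -> R) :
  param_dependent eA u -> param_dependent eB (fun y x => v x y) ->
  in_P2 eA eB (prod_behavior u v).
Proof.
move=> [u01 du] [v01 dv].
pose pA x y (_ : R) a := bindist u a x y; pose pB x y (_ : R) b := bindist v b x y.
have -> : prod_behavior u v = mixture pA pB (\d_(0 : R) : probability R R).
  apply: behavior_ext => a b x y.
  rewrite /mixture /response /pA /pB Rintegral_cst // [fine _](_ : _ = 1) ?mulr1 //.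
  exact (congr1 fine (probability_setT _)).
apply: in_P2_mixture => [x y a | x y b | x y l | x y l | x y y' l | x x' y l].
- exact: measurable_cst.
- exact: measurable_cst.
- split=> [a|]; last exact: sum_bindist.
  by have /andP[ge0 _] := bindist_ge0_le1 a (u01 x y); exact: ge0.
- split=> [b|]; last exact: sum_bindist.
  by have /andP[ge0 _] := bindist_ge0_le1 (u := v) b (v01 y x); exact: ge0.
- by rewrite tv_bool_dist; [exact: du | exact: sum_bindist..].
- by rewrite tv_bool_dist; [exact: dv | exact: sum_bindist..].
Qed.

Lemma extreme_prod_behavior_rigidA (R : realType) (X Y : finType) (eA eB : R)
    (u v : X -> Y -> R) :
  extreme_point (in_P2 eA eB) (prod_behavior u v) ->
  param_dependent eB (fun y x => v x y) ->
  forall w : X -> Y -> R, param_dependent eA (fun x y => u x y + w x y) ->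
  param_dependent eA (fun x y => u x y - w x y) ->
  forall x y, w x y = 0.
Proof.
move=> ext hv w hplus hminus x y.
suff /(congr1 (fun p => \sum_(b : bool) p true b x y)) :
    prod_behavior (fun x y => u x y + w x y) v = prod_behavior u v.
  by rewrite !prod_behavior_marginalA /bindist; lra.
apply: extreme_point_midpoint ext (prod_behavior_in_P2 hplus hv) (prod_behavior_in_P2 hminus hv) _.
by move=> a b x' y'; rewrite /prod_behavior /bindist; case: a; field.
Qed.

Lemma extreme_prod_behavior_rigidB (R : realType) (X Y : finType) (eA eB : R)
    (u v : X -> Y -> R) :
  extreme_point (in_P2 eA eB) (prod_behavior u v) ->
  param_dependent eA u ->
  forall w : Y -> X -> R, param_dependent eB (fun y x => v x y + w y x) ->
  param_dependent eB (fun y x => v x y - w y x) ->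
  forall y x, w y x = 0.
Proof.
move=> ext hu w hplus hminus y x.
suff /(congr1 (fun p => \sum_(a : bool) p a true x y)) :
    prod_behavior u (fun x y => v x y + w y x) = prod_behavior u v.
  by rewrite !prod_behavior_marginalB /bindist; lra.
apply: extreme_point_midpoint ext (prod_behavior_in_P2 hu hplus) (prod_behavior_in_P2 hu hminus) _.
by move=> a b x' y'; rewrite /prod_behavior /bindist; case: b; field.
Qed.

Theorem mainTheorem1 (R : realType) (X Y : finType)
  (hX : (1 < #|X|)%N) (hY : (1 < #|Y|)%N) (eA eB : R)
  (heA : 0 <= eA < 1) (heB : 0 <= eB < 1) (pext : behavior R X Y) :
  extreme_point (in_P2 eA eB) pext ->
  exists (pA : bool -> X -> Y -> R) (pB : bool -> X -> Y -> R),
    [/\ (forall x y, \sum_(a : bool) pA a x y = 1),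
        (forall x y, \sum_(b : bool) pB b x y = 1),
        (forall a x y, pA a x y \in [:: 0; eA; 1 - eA; 1]),
        (forall b x y, pB b x y \in [:: 0; eB; 1 - eB; 1]) &
        (forall a b x y, pext a b x y = pA a x y * pB b x y)].
Proof.
move=> ext; have [d [L [q [pA [pB [mpA [mpB [hA [hB [tvA [tvB hp]]]]]]]]]]] := ext.1.
have p_mix : pext = mixture pA pB q.
  by apply: behavior_ext => a b x y; rewrite /mixture /Rintegral -hp.
rewrite p_mix in ext.
have [l hl] := extreme_mixture_point mpA mpB hA hB tvA tvB ext.
set u := fun x y => pA x y l true; set v := fun x y => pB x y l true.
have p_prod : pext = prod_behavior u v.
  by apply: behavior_ext => a b x y; rewrite p_mix -hl (response_prod_behavior hA hB).
have hu : param_dependent eA u := param_dependent_pA hA tvA l.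
have hv : param_dependent eB (fun y x => v x y) := param_dependent_pB hB tvB l.
rewrite -p_mix p_prod in ext.
have u_vals := rigid_param_dependent_values hu (extreme_prod_behavior_rigidA ext hv).
have v_vals := rigid_param_dependent_values hv (extreme_prod_behavior_rigidB ext hu).
exists (bindist u), (bindist v); split=> [x y | x y | a x y | b x y | a b x y].
- exact: sum_bindist.
- exact: sum_bindist.
- exact: bindist_vertex_values.
- exact: bindist_vertex_values (v_vals y x).
- by rewrite p_prod.
Qed.
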